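(* Let $z=(x,\sigma)$ be a complete bounded solution of the hybrid system $\mathcal H=(C,f,D,g)$. For $j\in N$ let $t_{0,j}<t_{1,j}<t_{2,j}<\dots$ denote the successive (ordinary) time instants at which the value of $\sigma_j$ changes along the solution. Then there exists $\tau>0$ such that $t_{\ell+1,j}-t_{\ell,j}\ge\tau$ for all $\ell\ge1$ and all $j\in N$ (for which these instants exist).
   Context: Network model. $(N,E)$ is a connected directed graph with $N=\{1,\dots,|N|\}$, $E\subseteq N\times N$, with arbitrary orientation: if $(i,j)\in E$ then $(j,i)\notin E$. For $j\in N$, ''$i:i\to j$'' ranges over $i$ with $(i,j)\in E$ and ''$k:j\to k$'' over $k$ with $(j,k)\in E$. Constants: $M_j>0$, $p^L_j\in\mathbb{R}$ ($j\in N$), $B_{ij}>0$ ($(i,j)\in E$). Continuous state $x=(\eta,\omega,x^s)\in\mathbb{R}^n$ with $\eta_{ij}\in\mathbb{R}$ ($(i,j)\in E$), $\omega_j\in\mathbb{R}$, $x^s_j\in\mathbb{R}^{n_j}$ ($j\in N$), $n=|E|+|N|+\sum_jn_j$; $p_{ij}=B_{ij}\sin\eta_{ij}$, $s_j=g_j(x^s_j,-\omega_j)$, where $f_j:\mathbb{R}^{n_j}\times\mathbb{R}\to\mathbb{R}^{n_j}$, $g_j:\mathbb{R}^{n_j}\times\mathbb{R}\to\mathbb{R}$ are globally Lipschitz. Hysteretic loads as a hybrid system. For each $j$ constants $\overline d_j\ge0$ and thresholds $\omega^1_j>\omega^0_j>0$ are given. ${\rm sgn}(a)=1$ if $a\ge0$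 and $-1$ otherwise. The discrete state is $\sigma\in P^{|N|}$, $P=\{-1,0,1\}$, and $z=(x,\sigma)$. Let $\mathcal I_j(\omega_j)=\{{\rm sgn}(\omega_j)\}$ if $|\omega_j|>\omega^1_j$, $\{0\}$ if $|\omega_j|<\omega^0_j$, $\{0,{\rm sgn}(\omega_j)\}$ if $\omega^0_j\le|\omega_j|\le\omega^1_j$; $\Lambda=C=\{z\in\mathbb{R}^n\times P^{|N|}:\sigma_j\in\mathcal I_j(\omega_j)\ \forall j\}$. Flow map $f$ on $C$: $\dot\eta_{ij}=\omega_i-\omega_j$; $M_j\dot\omega_j=-p^L_j+s_j-\overline d_j\sigma_j-\sum_{k:j\to k}p_{jk}+\sum_{i:i\to j}p_{ij}$; $\dot x^s_j=f_j(x^s_j,-\omega_j)$; $\dot\sigma_j=0$. Jump set $D$: the set of $z\in\Lambda$ such that for some $j$, either ($|\omega_j|=\omega^1_j$ and $\sigma_j=0$) or ($|\omega_j|=\omega^0_j$ and $\sigma_j={\rm sgn}(\omega_j)$). Jump map $g$ on $D$: $x^+=x$; $\sigma_j^+={\rm sgn}(\omega_j)$ if $|\omega_j|=\omega^1_j$ and $\sigma_j=0$, $\sigma_j^+=0$ if $|\omega_j|=\omega^0_j$ and $\sigma_j={\rm sgn}(\omega_j)$, $\sigma_j^+=\sigma_j$ otherwise. Hybrid solutions. A hybrid time domain is a subset $K\subseteq\mathbb{R}_{\ge0}\times\mathbb{N}_0$ that is a union of a finite or infinite sequence of sets $[t_\ell,t_{\ell+1}]\times\{\ell\}$ ($0=t_0\le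 t_1\le\dots$), the last one (if any) possibly of the form $[t_\ell,t_{\ell+1})\times\{\ell\}$ or $[t_\ell,\infty)\times\{\ell\}$. A solution of $\mathcal H$ is a map $z:K\to\mathbb{R}^n\times P^{|N|}$ on a hybrid time domain with $z(0,0)\in C\cup D$, such that for each $\ell$, $t\mapsto z(t,\ell)$ is locally absolutely continuous on $T_\ell=\{t:(t,\ell)\in K\}$, and if $T_\ell$ has nonempty interior then $z(t,\ell)\in C$ for all $t$ in the interior and $\dot z(t,\ell)=f(z(t,\ell))$ for almost all $t\in T_\ell$; and whenever $(t,\ell),(t,\ell+1)\in K$, $z(t,\ell)\in D$ and $z(t,\ell+1)=g(z(t,\ell))$. A solution is complete if $K$ is unbounded, and bounded if its range is bounded. *)

From Stdlib Require Import Reals Lra Lia.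
Open Scope R_scope.

Fixpoint rsum (n : nat) (F : nat -> R) : R :=
  match n with O => 0 | S m => rsum m F + F m end.

Definition sgn (a : R) : R := if Rle_dec 0 a then 1 else -1.

(* Model data. Nodes are 0..nN-1 (the paper's 1..|N| shifted by one).
   Vectors x^s_j in R^{n_j} are represented as functions nat -> R, only
   the coordinates k < nx j being meaningful. *)
Record params := Params {
  nN   : nat;
  E    : nat -> nat -> bool;
  M    : nat -> R;
  pL   : nat -> R;
  B    : nat -> nat -> R;
  nx   : nat -> nat;
  fs   : nat -> (nat -> R) -> R -> (nat -> R);
  gs   : nat -> (nat -> R) -> R -> R;
  dbar : nat -> R;
  w0   : nat -> R;
  w1   : nat -> R
}.

Inductive ureach (P : params) : nat -> nat -> Prop :=
| ureach_refl : forall i, ureach P i i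
| ureach_fwd : forall i j k, E P i j = true -> ureach P j k -> ureach P i k
| ureach_bwd : forall i j k, E P j i = true -> ureach P j k -> ureach P i k.

Definition lipschitz_f (n : nat) (f : (nat -> R) -> R -> (nat -> R)) : Prop :=
  exists L : R, forall (a b : nat -> R) (u v : R),
    rsum n (fun k => Rabs (f a u k - f b v k))
      <= L * (rsum n (fun k => Rabs (a k - b k)) + Rabs (u - v)).

Definition lipschitz_g (n : nat) (g : (nat -> R) -> R -> R) : Prop :=
  exists L : R, forall (a b : nat -> R) (u v : R),
    Rabs (g a u - g b v)
      <= L * (rsum n (fun k => Rabs (a k - b k)) + Rabs (u - v)).

Definition standing (P : params) : Prop :=
  (forall i j, E P i j = true -> (i < nN P)%nat /\ (j < nN P)%nat) /\
  (forall i j, E P i j = true -> E P j i = false) /\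
  (forall i j, (i < nN P)%nat -> (j < nN P)%nat -> ureach P i j) /\
  (forall j, (j < nN P)%nat -> 0 < M P j) /\
  (forall i j, E P i j = true -> 0 < B P i j) /\
  (forall j, (j < nN P)%nat -> lipschitz_f (nx P j) (fs P j)) /\
  (forall j, (j < nN P)%nat -> lipschitz_g (nx P j) (gs P j)) /\
  (forall j, (j < nN P)%nat -> 0 <= dbar P j) /\
  (forall j, (j < nN P)%nat -> 0 < w0 P j /\ w0 P j < w1 P j).

(* Hybrid state z = (x, sigma), x = (eta, omega, x^s). sigma_j is a real
   number in P = {-1,0,1}. *)
Record state := State {
  eta   : nat -> nat -> R;
  omega : nat -> R;
  xs    : nat -> nat -> R;
  sigma : nat -> R
}.

Inductive comp := Ceta (i j : nat) | Comega (j : nat) | Cxs (j k : nat) | Csig (j : nat).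

Definition relevant (P : params) (c : comp) : Prop :=
  match c with
  | Ceta i j => E P i j = true
  | Comega j => (j < nN P)%nat
  | Cxs j k => (j < nN P)%nat /\ (k < nx P j)%nat
  | Csig j => (j < nN P)%nat
  end.

Definition proj (c : comp) (z : state) : R :=
  match c with
  | Ceta i j => eta z i j
  | Comega j => omega z j
  | Cxs j k => xs z j k
  | Csig j => sigma z j
  end.

Definition inI (a b w s : R) : Prop :=
  (b < Rabs w /\ s = sgn w) \/
  (Rabs w < a /\ s = 0) \/
  (a <= Rabs w <= b /\ (s = 0 \/ s = sgn w)).

Definition inC (P : params) (z : state) : Prop :=
  forall j, (j < nN P)%nat -> inI (w0 P j) (w1 P j) (omega z j) (sigma z j).

Definition inD (P : params) (z : state) : Prop :=
  inC P z /\
  exists j, (j < nN P)%nat /\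
    ((Rabs (omega z j) = w1 P j /\ sigma z j = 0) \/
     (Rabs (omega z j) = w0 P j /\ sigma z j = sgn (omega z j))).

Definition gsig (P : params) (z : state) (j : nat) : R :=
  if Nat.ltb j (nN P) then
    if Req_dec_T (Rabs (omega z j)) (w1 P j) then
      if Req_dec_T (sigma z j) 0 then sgn (omega z j) else
      if Req_dec_T (Rabs (omega z j)) (w0 P j) then
        (if Req_dec_T (sigma z j) (sgn (omega z j)) then 0 else sigma z j)
      else sigma z j
    else if Req_dec_T (Rabs (omega z j)) (w0 P j) then
      (if Req_dec_T (sigma z j) (sgn (omega z j)) then 0 else sigma z j)
    else sigma z j
  else sigma z j.

Definition gmap (P : params) (z : state) : state :=
  State (eta z) (omega z) (xs z) (gsig P z).

Definition omega_rhs (P : params) (z : state) (j : nat) : R :=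
  - pL P j + gs P j (xs z j) (- omega z j) - dbar P j * sigma z j
  - rsum (nN P) (fun k => if E P j k then B P j k * sin (eta z j k) else 0)
  + rsum (nN P) (fun i => if E P i j then B P i j * sin (eta z i j) else 0).

Definition fmap (P : params) (z : state) (c : comp) : R :=
  match c with
  | Ceta i j => omega z i - omega z j
  | Comega j => omega_rhs P z j / M P j
  | Cxs j k => fs P j (xs z j) (- omega z j) k
  | Csig j => 0
  end.

Inductive last_kind := LClosed | LOpen | LInfinite.

Definition last_interval (lk : last_kind) (a b s : R) : Prop :=
  match lk with
  | LClosed => a <= s <= b
  | LOpen => a <= s < b
  | LInfinite => a <= s
  end.

Definition hybrid_time_domain (K : R -> nat -> Prop) : Prop :=
  exists t : nat -> R, t O = 0 /\ (forall l, t l <= t (S l)) /\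
   ((forall s l, K s l <-> t l <= s <= t (S l)) \/
    (exists (J : nat) (lk : last_kind), forall s l,
        K s l <-> ((l < J)%nat /\ t l <= s <= t (S l)) \/
                  (l = J /\ last_interval lk (t J) (t (S J)) s))).

Definition null_set (S : R -> Prop) : Prop :=
  forall eps, 0 < eps -> exists u v : nat -> R,
    (forall k, u k <= v k) /\
    (forall t, S t -> exists k, u k < t < v k) /\
    (forall n, rsum n (fun k => v k - u k) <= eps).

Definition abs_cont_on (F : R -> R) (a b : R) : Prop :=
  forall eps, 0 < eps -> exists delta, 0 < delta /\
    forall (n : nat) (u v : nat -> R),
      (forall k, (k < n)%nat -> a <= u k <= v k /\ v k <= b) ->
      (forall k, (S k < n)%nat -> v k <= u (S k)) ->
      rsum n (fun k => v k - u k) < delta ->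
      rsum n (fun k => Rabs (F (v k) - F (u k))) < eps.

Definition interior_pt (T : R -> Prop) (t : R) : Prop :=
  exists e, 0 < e /\ forall s, Rabs (s - t) < e -> T s.

Definition is_solution (P : params) (K : R -> nat -> Prop)
    (z : R -> nat -> state) : Prop :=
  hybrid_time_domain K /\
  K 0 O /\ (inC P (z 0 O) \/ inD P (z 0 O)) /\
  (forall l : nat,
     (forall a b, a <= b -> (forall s, a <= s <= b -> K s l) ->
        forall c, relevant P c -> abs_cont_on (fun s => proj c (z s l)) a b) /\
     ((exists t, interior_pt (fun s => K s l) t) ->
        (forall t, interior_pt (fun s => K s l) t -> inC P (z t l)) /\
        null_set (fun t => interior_pt (fun s => K s l) t /\
           ~ (forall c, relevant P c ->
                derivable_pt_lim (fun s => proj c (z s l)) t (fmap P (z t l) c))))) /\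
  (forall t l, K t l -> K t (S l) ->
     inD P (z t l) /\ z t (S l) = gmap P (z t l)).

Definition complete (K : R -> nat -> Prop) : Prop :=
  forall r, exists t l, K t l /\ r <= t + INR l.

Definition bounded_sol (P : params) (K : R -> nat -> Prop)
    (z : R -> nat -> state) : Prop :=
  exists bd, forall t l c, K t l -> relevant P c -> Rabs (proj c (z t l)) <= bd.

Definition sigma_change (K : R -> nat -> Prop) (z : R -> nat -> state)
    (j : nat) (t : R) : Prop :=
  exists l, K t l /\ K t (S l) /\ sigma (z t (S l)) j <> sigma (z t l) j.

(* A switch of [sigma_j] from 0 to [sgn omega_j] happens only at [|omega_j| = w1], and back
   to 0 only at [|omega_j| = w0] with [sigma_j] of the sign of [omega_j]; so between two
   switches [omega_j] has to cross the hysteresis band and change by at least [w1 - w0].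
   Jumps do not move [omega_j], and along flows [|d omega_j / dt|] is bounded by some [L_j]
   because the solution is bounded, the [g_j] are Lipschitz and [|sin| <= 1].  Hence two
   switches are at least [(w1 - w0) / L_j] apart, and [tau] is the minimum over the finitely
   many nodes.  The only analysis needed is that an absolutely continuous function with
   derivative a.e. bounded by [L] is [L]-Lipschitz, proved here by continuous induction. *)
From Pilot Require Import Defs.
From Stdlib Require Import Reals Lra Lia Classical Arith.
Open Scope R_scope.

Lemma rsum_ext n F G : (forall k, (k < n)%nat -> F k = G k) -> rsum n F = rsum n G.
Proof.
  induction n; intros H; simpl; auto.
  rewrite IHn, H by (intros; apply H || idtac; lia); reflexivity.
Qed.

Lemma rsum_le n F G : (forall k, (k < n)%nat -> F k <= G k) -> rsum n F <= rsum n G.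
Proof.
  induction n; intros H; simpl; [lra|].
  apply Rplus_le_compat; [apply IHn; intros|]; apply H; lia.
Qed.

Lemma rsum_nonneg n F : (forall k, (k < n)%nat -> 0 <= F k) -> 0 <= rsum n F.
Proof.
  intros H. assert (H0 : rsum n (fun _ => 0) = 0) by (clear H; induction n; simpl; lra).
  rewrite <- H0. apply rsum_le, H.
Qed.

Lemma rsum_plus n F G : rsum n (fun k => F k + G k) = rsum n F + rsum n G.
Proof. induction n; simpl; [|rewrite IHn]; lra. Qed.

Lemma rsum_le_longer n n' F : (n <= n')%nat -> (forall k, 0 <= F k) -> rsum n F <= rsum n' F.
Proof. intros H HF. induction H; simpl; [|specialize (HF m)]; lra. Qed.

Lemma rsum_term_le n F k : (k < n)%nat -> (forall i, 0 <= F i) -> F k <= rsum n F.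
Proof.
  intros Hk HF. apply Rle_trans with (rsum (S k) F); [|apply rsum_le_longer; auto].
  simpl. pose proof (rsum_nonneg k F (fun i _ => HF i)). lra.
Qed.

Lemma rsum_abs_le n F G : (forall k, (k < n)%nat -> Rabs (F k) <= G k) ->
  Rabs (rsum n F) <= rsum n G.
Proof.
  induction n; intros H; simpl; [rewrite Rabs_R0; lra|].
  eapply Rle_trans; [apply Rabs_triang|].
  apply Rplus_le_compat; [apply IHn; intros|]; apply H; lia.
Qed.

Lemma rsum_succ_l n F : rsum (S n) F = F O + rsum n (fun k => F (S k)).
Proof.
  induction n; [simpl; lra|].
  change (rsum (S (S n)) F) with (rsum (S n) F + F (S n)). rewrite IHn. simpl. lra.
Qed.

Lemma Rabs_le_inv x c : Rabs x <= c -> -c <= x <= c.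
Proof. unfold Rabs; destruct Rcase_abs; lra. Qed.

Lemma lub_approx (A : R -> Prop) s e : is_lub A s -> 0 < e ->
  exists x, A x /\ s - e < x <= s.
Proof.
  intros [Hub Hl] He. apply NNPP; intro Hn.
  enough (is_upper_bound A (s - e)) by (specialize (Hl _ H); lra).
  intros x Ax. apply Rnot_lt_le; intro Hx. apply Hn. exists x. split; [|split]; auto; lra.
Qed.

Lemma null_set_add_point (N : R -> Prop) c :
  null_set N -> null_set (fun t => N t \/ t = c).
Proof.
  intros HN eps He. destruct (HN (eps/2)) as [u [v [Huv [Hcov Hsum]]]]; [lra|].
  exists (fun k => match k with O => c - eps/4 | S k => u k end).
  exists (fun k => match k with O => c + eps/4 | S k => v k end).
  split; [intros [|k]; [lra|apply Huv]|split].
  - intros t [Ht|Ht]; [destruct (Hcov t Ht) as [k Hk]; exists (S k)|exists O; lra]; exact Hk.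
  - intros [|n]; [simpl; lra|]. rewrite rsum_succ_l. specialize (Hsum n). simpl. lra.
Qed.

Lemma abs_cont_opp F a b : abs_cont_on F a b -> abs_cont_on (fun x => - F x) a b.
Proof.
  intros H eps He. destruct (H eps He) as [d [Hd Hd']]. exists d. split; auto.
  intros n u v H1 H2 H3.
  rewrite (rsum_ext n _ (fun k => Rabs (F (v k) - F (u k)))); auto.
  intros k _. rewrite <- Rabs_Ropp. f_equal. ring.
Qed.

Lemma derivable_pt_lim_slope_lt F s d c : derivable_pt_lim F s d -> d < c ->
  exists del, 0 < del /\ forall x y, s - del < x <= s -> s <= y < s + del ->
    F y - F x <= c * (y - x).
Proof.
  intros Hd Hdc. destruct (Hd (c - d)) as [[del Hdel] Hlim]; [lra|].
  assert (Hquot : forall h, h <> 0 -> Rabs h < del -> (F (s + h) - F s) / h < c).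
  { intros h Hh Hhd. apply Rle_lt_trans with (d + Rabs ((F (s + h) - F s) / h - d)).
    - pose proof (Rle_abs ((F (s + h) - F s) / h - d)). lra.
    - specialize (Hlim h Hh Hhd). simpl in Hlim. lra. }
  exists del. split; auto. intros x y Hx Hy.
  assert (F y - F s <= c * (y - s)).
  { destruct (Req_dec y s) as [->|Hys]; [lra|].
    specialize (Hquot (y - s)). replace (s + (y - s)) with y in Hquot by ring.
    assert (Hq : (F y - F s) / (y - s) < c) by (apply Hquot; [lra|rewrite Rabs_right; lra]).
    assert (Heq : F y - F s = (F y - F s) / (y - s) * (y - s)) by (field; lra).
    rewrite Heq. apply Rmult_le_compat_r; lra. }
  assert (F s - F x <= c * (s - x)).
  { destruct (Req_dec x s) as [->|Hxs]; [lra|].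
    specialize (Hquot (x - s)). replace (s + (x - s)) with x in Hquot by ring.
    assert (Hq : (F x - F s) / (x - s) < c) by (apply Hquot; [lra|rewrite Rabs_left; lra]).
    assert (Heq : F s - F x = (F x - F s) / (x - s) * (s - x)) by (field; lra).
    rewrite Heq. apply Rmult_le_compat_r; lra. }
  lra.
Qed.

Lemma rsum_snoc m H G : (forall i, (i < m)%nat -> H i = G i) -> rsum (S m) H = rsum m G + H m.
Proof. intros HG. simpl. rewrite (rsum_ext m H G); auto. Qed.

Definition overlap (u v x y : R) : R := Rmax 0 (Rmin v y - Rmax u x).

Lemma overlap_split u v x y w : u <= v -> x <= y -> y <= w ->
  overlap u v x w = overlap u v x y + overlap u v y w.
Proof. intros. unfold overlap, Rmax, Rmin. repeat destruct Rle_dec; lra. Qed.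

Lemma overlap_nonneg u v x y : 0 <= overlap u v x y.
Proof. apply Rmax_l. Qed.

Lemma overlap_le u v x y : u <= v -> overlap u v x y <= v - u.
Proof. intros. unfold overlap, Rmax, Rmin. repeat destruct Rle_dec; lra. Qed.

Lemma overlap_inside u v x y : u <= x -> x <= y -> y <= v -> overlap u v x y = y - x.
Proof. intros. unfold overlap, Rmax, Rmin. repeat destruct Rle_dec; lra. Qed.

Section Creeping.
Variables (F : R -> R) (a b c : R) (u v : nat -> R).
Hypothesis Huv : forall k, u k <= v k.

(* [x] is reached when the excess of [F x - F a] over slope [c] is paid for by the
   variation of [F] on a chain of disjoint subintervals of [[a, x]] whose total length
   is at most the part of the cover [(u k, v k)] lying in [[a, x]]. *)
Definition reached (x : R) : Prop :=
  a <= x <= b /\ exists n m (p q : nat -> R),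
    (forall i, (i < m)%nat -> a <= p i <= q i /\ q i <= x) /\
    (forall i, (S i < m)%nat -> q i <= p (S i)) /\
    rsum m (fun i => q i - p i) <= rsum n (fun k => overlap (u k) (v k) a x) /\
    F x - F a <= c * (x - a) + rsum m (fun i => Rabs (F (q i) - F (p i))).

Lemma reached_start : a <= b -> reached a.
Proof.
  intros Hab. split; [lra|]. exists O, O, (fun _ => a), (fun _ => a). simpl.
  repeat split; intros; try lia; lra.
Qed.

Lemma reached_slope x y : reached x -> x <= y <= b -> F y - F x <= c * (y - x) -> reached y.
Proof.
  intros [Hx [n [m [p [q [Hpq [Hord [Hlen HF]]]]]]]] Hy Hxy.
  split; [lra|]. exists n, m, p, q. split; [|split; [auto|split]].
  - intros i Hi. destruct (Hpq i Hi). lra.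
  - eapply Rle_trans; [apply Hlen|]. apply rsum_le. intros k _.
    rewrite (overlap_split (u k) (v k) a x y) by (auto; lra).
    pose proof (overlap_nonneg (u k) (v k) x y). lra.
  - lra.
Qed.

Lemma reached_cover x y k : 0 <= c -> reached x -> x <= y <= b -> u k <= x -> y <= v k ->
  reached y.
Proof.
  intros Hc [Hx [n [m [p [q [Hpq [Hord [Hlen HF]]]]]]]] Hy Hux Hyv.
  set (p' i := if Nat.ltb i m then p i else x).
  set (q' i := if Nat.ltb i m then q i else y).
  assert (Hold : forall i, (i < m)%nat -> p' i = p i /\ q' i = q i).
  { intros i Hi. unfold p', q'. destruct (Nat.ltb_spec i m); [auto|lia]. }
  assert (Hnew : p' m = x /\ q' m = y) by (unfold p', q'; rewrite Nat.ltb_irrefl; auto).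
  split; [lra|]. exists (Nat.max n (S k)), (S m), p', q'. split; [|split; [|split]].
  - intros i Hi. destruct (Nat.eq_dec i m) as [->|Him]; [lra|].
    destruct (Hold i) as [-> ->]; [lia|]. destruct (Hpq i); [lia|]. lra.
  - intros i Hi. destruct (Hold i) as [_ ->]; [lia|].
    destruct (Nat.eq_dec (S i) m) as [<-|Him].
    + destruct Hnew as [-> _]. apply Hpq. lia.
    + destruct (Hold (S i)) as [-> _]; [lia|]. apply Hord. lia.
  - rewrite (rsum_snoc m _ (fun i => q i - p i))
      by (intros i Hi; destruct (Hold i Hi) as [-> ->]; auto).
    destruct Hnew as [-> ->].
    rewrite (rsum_ext (Nat.max n (S k)) _ (fun k0 => overlap (u k0) (v k0) a x + overlap (u k0) (v k0) x y))
      by (intros; apply overlap_split; auto; lra).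
    rewrite rsum_plus.
    pose proof (rsum_le_longer n (Nat.max n (S k)) (fun k0 => overlap (u k0) (v k0) a x)
                  ltac:(lia) (fun _ => overlap_nonneg _ _ _ _)).
    pose proof (rsum_term_le (Nat.max n (S k)) (fun k0 => overlap (u k0) (v k0) x y) k
                  ltac:(lia) (fun _ => overlap_nonneg _ _ _ _)).
    simpl in H0. rewrite overlap_inside in H0 by lra. lra.
  - rewrite (rsum_snoc m _ (fun i => Rabs (F (q i) - F (p i))))
      by (intros i Hi; destruct (Hold i Hi) as [-> ->]; auto).
    destruct Hnew as [-> ->].
    pose proof (Rle_abs (F y - F x)). pose proof (Rmult_le_pos c (y - x) Hc ltac:(lra)).
    assert (c * (y - a) = c * (x - a) + c * (y - x)) by ring. lra.
Qed.

Lemma reached_end :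
  a <= b -> 0 <= c ->
  (forall t, a <= t <= b -> (exists k, u k < t < v k) \/
     (a < t < b /\ exists d, derivable_pt_lim F t d /\ d < c)) ->
  reached b.
Proof.
  intros Hab Hc Hgood.
  assert (Ha : reached a) by (apply reached_start; auto).
  destruct (completeness reached) as [s Hs]; [exists b; intros x [Hx _]; lra|eauto|].
  assert (Has : a <= s) by (apply (proj1 Hs); auto).
  assert (Hsb : s <= b) by (apply (proj2 Hs); intros x [Hx _]; lra).
  destruct (Hgood s (conj Has Hsb)) as [[k Hk]|[Hs_in [d [Hd Hdc]]]].
  - assert (Hx : exists x, reached x /\ u k <= x <= s).
    { destruct (Req_dec s a) as [->|Hsa]; [exists a; split; auto; lra|].
      destruct (lub_approx reached s (s - Rmax (u k) a) Hs) as [x [Hx Hxs]].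
      - unfold Rmax; destruct Rle_dec; lra.
      - exists x. split; auto. pose proof (Rmax_l (u k) a). lra. }
    destruct Hx as [x [Hx Hxs]].
    assert (Hy : reached (Rmin (v k) b)).
    { apply (reached_cover x _ k); auto; [|lra|apply Rmin_l].
      split; [unfold Rmin; destruct Rle_dec; lra|apply Rmin_r]. }
    unfold Rmin in Hy. destruct Rle_dec; auto.
    pose proof (proj1 Hs _ Hy). lra.
  - exfalso. destruct (derivable_pt_lim_slope_lt F s d c Hd Hdc) as [del [Hdel Hslope]].
    destruct (lub_approx reached s (Rmin del (s - a)) Hs) as [x [Hx Hxs]].
    { unfold Rmin; destruct Rle_dec; lra. }
    set (y := s + Rmin (del / 2) ((b - s) / 2)).
    assert (Hy : s < y < b /\ y < s + del) by (unfold y, Rmin; destruct Rle_dec; lra).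
    assert (Hry : reached y).
    { apply (reached_slope x); [auto|lra|]. apply Hslope; [|lra].
      pose proof (Rmin_l del (s - a)). lra. }
    pose proof (proj1 Hs _ Hry). lra.
Qed.

End Creeping.

(* The exceptional set together with the endpoints is covered by intervals of total length
   below the modulus of absolute continuity for [eps]; continuous induction then charges the
   excess over slope [c] to the variation of [F] on part of that cover. *)
Lemma abs_cont_slope_lt (F : R -> R) (a b L : R) (N : R -> Prop) :
  a < b -> 0 <= L -> abs_cont_on F a b -> null_set N ->
  (forall t, a < t < b -> ~ N t -> exists d, derivable_pt_lim F t d /\ d <= L) ->
  forall c eps, L < c -> 0 < eps -> F b - F a < c * (b - a) + eps.
Proof.
  intros Hab HL Hac HN Hd c eps Hc He.
  destruct (Hac eps He) as [del [Hdel Hvar]].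
  destruct (null_set_add_point _ b (null_set_add_point N a HN) (del / 2))
    as [u [v [Huv [Hcov Hsum]]]]; [lra|].
  assert (Hb : reached F a b c u v b).
  { apply reached_end; [auto|lra|lra|]. intros t Ht.
    destruct (classic ((N t \/ t = a) \/ t = b)) as [Hbad|Hok]; [left; auto|right].
    destruct (Hd t) as [d [Hder HdL]]; [lra|tauto|].
    split; [lra|]. exists d. split; [auto|lra]. }
  destruct Hb as [_ [n [m [p [q [Hpq [Hord [Hlen HF]]]]]]]].
  assert (rsum n (fun k => overlap (u k) (v k) a b) <= rsum n (fun k => v k - u k))
    by (apply rsum_le; intros; apply overlap_le; auto).
  specialize (Hsum n).
  assert (rsum m (fun k => Rabs (F (q k) - F (p k))) < eps) by (apply Hvar; auto; lra).
  lra.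
Qed.

Lemma abs_cont_slope_le (F : R -> R) (a b L : R) (N : R -> Prop) :
  a <= b -> 0 <= L -> abs_cont_on F a b -> null_set N ->
  (forall t, a < t < b -> ~ N t -> exists d, derivable_pt_lim F t d /\ d <= L) ->
  F b - F a <= L * (b - a).
Proof.
  intros Hab HL Hac HN Hd. destruct (Req_dec a b) as [->|Hne]; [lra|].
  apply Rnot_lt_le. intro Hgt. set (gap := F b - F a - L * (b - a)).
  assert (Hgap : 0 < gap / (2 * (b - a))) by (apply Rdiv_lt_0_compat; unfold gap; lra).
  pose proof (abs_cont_slope_lt F a b L N ltac:(lra) HL Hac HN Hd
                (L + gap / (2 * (b - a))) (gap / 2) ltac:(lra) ltac:(unfold gap; lra)).
  assert ((L + gap / (2 * (b - a))) * (b - a) = L * (b - a) + gap / 2) by (field; lra).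
  unfold gap in *. lra.
Qed.

Lemma abs_cont_lipschitz (F : R -> R) (a b L : R) (N : R -> Prop) :
  a <= b -> 0 <= L -> abs_cont_on F a b -> null_set N ->
  (forall t, a < t < b -> ~ N t -> exists d, derivable_pt_lim F t d /\ Rabs d <= L) ->
  Rabs (F b - F a) <= L * (b - a).
Proof.
  intros Hab HL Hac HN Hd. apply Rabs_le. split.
  - enough ((fun x => - F x) b - (fun x => - F x) a <= L * (b - a)) by (simpl in *; lra).
    apply (abs_cont_slope_le (fun x => - F x) a b L N); auto using abs_cont_opp.
    intros t Ht Hn. destruct (Hd t Ht Hn) as [d [Hder HdL]]. exists (- d).
    split; [apply derivable_pt_lim_opp, Hder|apply Rabs_le_inv in HdL; lra].
  - apply (abs_cont_slope_le _ a b L N); auto.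
    intros t Ht Hn. destruct (Hd t Ht Hn) as [d [Hder HdL]]. exists d.
    split; [auto|apply Rabs_le_inv in HdL; lra].
Qed.

Section HybridTimeDomain.
Variable K : R -> nat -> Prop.
Hypothesis HK : hybrid_time_domain K.

Let last_interval_lb lk a b s : last_interval lk a b s -> a <= s.
Proof. destruct lk; simpl; lra. Qed.

Let seq_le (t : nat -> R) : (forall l, t l <= t (S l)) -> forall m n, (m <= n)%nat -> t m <= t n.
Proof. intros H m n Hmn. induction Hmn; [lra|]. specialize (H m0). lra. Qed.

Lemma hdom_le_of_lt x y m n : K x m -> K y n -> (m < n)%nat -> x <= y.
Proof.
  destruct HK as [t [_ [Ht [Hi|[J [lk Hf]]]]]]; intros Hx Hy Hmn;
    pose proof (seq_le t Ht (S m) n ltac:(lia)).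
  - apply Hi in Hx, Hy. lra.
  - apply Hf in Hx, Hy.
    destruct Hy as [[Hn Hy]|[Hn Hy]]; destruct Hx as [[Hm Hx]|[Hm Hx]]; try lia; [lra|].
    apply last_interval_lb in Hy. subst. lra.
Qed.

Lemma hdom_convex x y r m : K x m -> K y m -> x <= r <= y -> K r m.
Proof.
  destruct HK as [t [_ [Ht [Hi|[J [lk Hf]]]]]]; intros Hx Hy Hr.
  - apply Hi in Hx, Hy. apply Hi. lra.
  - apply Hf in Hx, Hy. apply Hf.
    destruct Hy as [[Hn Hy]|[Hn Hy]]; destruct Hx as [[Hm Hx]|[Hm Hx]]; try lia.
    + left. split; [auto|lra].
    + right. split; [auto|]. destruct lk; simpl in *; lra.
Qed.

Lemma hdom_jump_before y n m : K y n -> (m < n)%nat -> exists q, K q m /\ K q (S m).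
Proof.
  destruct HK as [t [_ [Ht [Hi|[J [lk Hf]]]]]]; intros Hy Hmn; exists (t (S m));
    pose proof (Ht m); pose proof (Ht (S m)).
  - split; apply Hi; lra.
  - apply Hf in Hy. split; apply Hf.
    + left. split; [destruct Hy as [[? ?]|[? ?]]; lia|lra].
    + destruct (Nat.lt_ge_cases (S m) J); [left; split; [auto|lra]|right].
      destruct Hy as [[? ?]|[HnJ Hy]]; [lia|]. assert (S m = J) by lia. subst.
      split; [auto|]. destruct lk; simpl in *; lra.
Qed.

Lemma hdom_le_jump x q m : K x m -> K q m -> K q (S m) -> x <= q.
Proof.
  destruct HK as [t [_ [Ht [Hi|[J [lk Hf]]]]]]; intros Hx Hq1 Hq2.
  - apply Hi in Hx, Hq1, Hq2. lra.
  - apply Hf in Hx, Hq1, Hq2.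
    destruct Hq1 as [[HmJ Hq1]|[HmJ Hq1]];
      [|destruct Hq2 as [[? ?]|[? ?]]; lia].
    destruct Hx as [[? ?]|[? ?]]; [|lia].
    destruct Hq2 as [[? ?]|[? Hq2]]; [lra|]. apply last_interval_lb in Hq2. subst. lra.
Qed.

Lemma hdom_jump_le x y m n : K x m -> K x (S m) -> K y n -> (S m <= n)%nat -> x <= y.
Proof.
  intros Hx1 Hx2 Hy Hmn. destruct (Nat.eq_dec (S m) n) as [<-|Hne].
  - destruct HK as [t [_ [Ht [Hi|[J [lk Hf]]]]]].
    + apply Hi in Hx1, Hy. lra.
    + apply Hf in Hx1, Hx2, Hy. destruct Hx1 as [[? ?]|[? ?]]; [|destruct Hx2 as [[? ?]|[? ?]]; lia].
      destruct Hy as [[? ?]|[HJ Hy]]; [lra|]. apply last_interval_lb in Hy. subst. lra.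
  - apply (hdom_le_of_lt x y (S m) n); auto. lia.
Qed.

End HybridTimeDomain.

Lemma sgn_neq0 a : sgn a <> 0.
Proof. unfold sgn; destruct Rle_dec; lra. Qed.

Lemma gsig_changed P zz j : (j < nN P)%nat -> gsig P zz j <> Defs.sigma zz j ->
  (Rabs (omega zz j) = w1 P j /\ Defs.sigma zz j = 0 /\ gsig P zz j = sgn (omega zz j)) \/
  (Rabs (omega zz j) = w0 P j /\ Defs.sigma zz j = sgn (omega zz j) /\ gsig P zz j = 0).
Proof.
  intros Hj. unfold gsig. destruct (Nat.ltb_spec j (nN P)); [|lia].
  repeat destruct Req_dec_T; intros Hc; try (exfalso; apply Hc; reflexivity); auto.
Qed.

(* Two successive switches of [sigma_j] are one switch-on at [|omega_j| = w1] and one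
   switch-off at [|omega_j| = w0], in either order. *)
Lemma hysteresis_gap P z1 z2 j : (j < nN P)%nat ->
  gsig P z1 j <> Defs.sigma z1 j -> gsig P z2 j <> Defs.sigma z2 j -> Defs.sigma z2 j = gsig P z1 j ->
  w1 P j - w0 P j <= Rabs (omega z2 j - omega z1 j).
Proof.
  intros Hj Hc1 Hc2 Hnext.
  destruct (gsig_changed P z1 j Hj Hc1) as [[A1 [A2 A3]]|[A1 [A2 A3]]];
    destruct (gsig_changed P z2 j Hj Hc2) as [[B1 [B2 B3]]|[B1 [B2 B3]]].
  - exfalso. apply (sgn_neq0 (omega z1 j)). congruence.
  - pose proof (Rabs_triang_inv (omega z1 j) (omega z2 j)).
    rewrite Rabs_minus_sym in H. lra.
  - pose proof (Rabs_triang_inv (omega z2 j) (omega z1 j)). lra.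
  - exfalso. apply (sgn_neq0 (omega z2 j)). congruence.
Qed.

Lemma lipschitz_g_bounded n g bd : lipschitz_g n g ->
  exists C, forall x w, (forall k, (k < n)%nat -> Rabs (x k) <= bd) -> Rabs w <= bd ->
    Rabs (g x w) <= C.
Proof.
  intros [Lg HLg]. exists (Rabs (g (fun _ => 0) 0) + Rabs Lg * (rsum n (fun _ => bd) + bd)).
  intros x w Hx Hw. pose proof (HLg x (fun _ => 0) w 0) as Hlip.
  set (dist := rsum n (fun k => Rabs (x k - 0)) + Rabs (w - 0)) in Hlip.
  assert (Hdist : 0 <= dist <= rsum n (fun _ => bd) + bd).
  { unfold dist. rewrite Rminus_0_r.
    pose proof (rsum_nonneg n (fun k => Rabs (x k - 0)) (fun k _ => Rabs_pos _)).
    assert (rsum n (fun k => Rabs (x k - 0)) <= rsum n (fun _ => bd))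
      by (apply rsum_le; intros; rewrite Rminus_0_r; auto).
    pose proof (Rabs_pos w). lra. }
  assert (Lg * dist <= Rabs Lg * (rsum n (fun _ => bd) + bd)).
  { apply Rle_trans with (Rabs Lg * dist);
      [apply Rmult_le_compat_r; [lra|apply Rle_abs]|apply Rmult_le_compat_l; [apply Rabs_pos|lra]]. }
  pose proof (Rabs_triang_inv (g x w) (g (fun _ => 0) 0)). lra.
Qed.

Lemma rsum_coupling_bound n (e : nat -> bool) (b x : nat -> R) :
  Rabs (rsum n (fun k => if e k then b k * sin (x k) else 0)) <= rsum n (fun k => Rabs (b k)).
Proof.
  apply rsum_abs_le. intros k _. destruct (e k); [|rewrite Rabs_R0; apply Rabs_pos].
  rewrite Rabs_mult. rewrite <- (Rmult_1_r (Rabs (b k))) at 2.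
  apply Rmult_le_compat_l; [apply Rabs_pos|apply Rabs_le, SIN_bound].
Qed.

Lemma omega_rate_bounded P (HP : standing P) K z (Hbd : bounded_sol P K z) j :
  (j < nN P)%nat ->
  exists Lj, 0 <= Lj /\ forall t l, K t l -> Rabs (omega_rhs P (z t l) j / M P j) <= Lj.
Proof.
  intros Hj. destruct HP as [_ [_ [_ [HM [_ [_ [Hg _]]]]]]].
  destruct Hbd as [bd Hbd].
  destruct (lipschitz_g_bounded _ _ bd (Hg j Hj)) as [Cg HCg].
  set (C := Rabs (pL P j) + Cg + Rabs (dbar P j) * bd
            + rsum (nN P) (fun k => Rabs (B P j k)) + rsum (nN P) (fun i => Rabs (B P i j))).
  exists (Rmax 0 (C / M P j)). split; [apply Rmax_l|]. intros t l Htl.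
  assert (Hrhs : Rabs (omega_rhs P (z t l) j) <= C).
  { assert (Hgs : Rabs (gs P j (xs (z t l) j) (- omega (z t l) j)) <= Cg).
    { apply HCg; [intros k Hk; apply (Hbd t l (Cxs j k)); simpl; auto|].
      rewrite Rabs_Ropp. apply (Hbd t l (Comega j)); auto. }
    assert (Hds : Rabs (dbar P j * Defs.sigma (z t l) j) <= Rabs (dbar P j) * bd).
    { rewrite Rabs_mult. apply Rmult_le_compat_l; [apply Rabs_pos|].
      apply (Hbd t l (Csig j)); auto. }
    pose proof (rsum_coupling_bound (nN P) (E P j) (B P j) (eta (z t l) j)).
    pose proof (rsum_coupling_bound (nN P) (fun i => E P i j) (fun i => B P i j)
                  (fun i => eta (z t l) i j)).
    pose proof (Rle_abs (pL P j)). pose proof (Rle_abs (- pL P j)). rewrite Rabs_Ropp in *.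
    unfold omega_rhs, C. apply Rabs_le.
    repeat match goal with H : Rabs _ <= _ |- _ => apply Rabs_le_inv in H end. lra. }
  specialize (HM j Hj).
  unfold Rdiv. rewrite Rabs_mult, Rabs_inv, (Rabs_right (M P j)) by lra.
  eapply Rle_trans; [|apply Rmax_r].
  apply Rmult_le_compat_r; [left; apply Rinv_0_lt_compat|]; auto.
Qed.

Lemma nat_least_witness (Q : nat -> Prop) n : Q n ->
  exists m, Q m /\ forall k, (k < m)%nat -> ~ Q k.
Proof.
  induction n as [n IH] using lt_wf_ind. intros Hn.
  destruct (classic (exists k, (k < n)%nat /\ Q k)) as [[k [Hk Qk]]|Hno]; [exact (IH k Hk Qk)|].
  exists n. split; [auto|]. intros k Hk Qk. apply Hno. eauto.
Qed.

Lemma fin_pos_lower_bound (Q : nat -> R -> Prop) n :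
  (forall j c c', Q j c -> 0 < c' <= c -> Q j c') ->
  (forall j, (j < n)%nat -> exists c, 0 < c /\ Q j c) ->
  exists c, 0 < c /\ forall j, (j < n)%nat -> Q j c.
Proof.
  intros Hdown. induction n as [|n IH]; intros H; [exists 1; split; [lra|intros; lia]|].
  destruct IH as [c1 [Hc1 Q1]]; [intros; apply H; lia|].
  destruct (H n ltac:(lia)) as [c2 [Hc2 Q2]].
  assert (Hmin : 0 < Rmin c1 c2) by (apply Rmin_glb_lt; auto).
  exists (Rmin c1 c2). split; [auto|]. intros j Hj. destruct (Nat.eq_dec j n) as [->|Hjn].
  - apply (Hdown _ c2); auto using Rmin_r.
  - apply (Hdown _ c1); auto using Rmin_l. apply Q1. lia.
Qed.

Section Flow.
Variables (P : params) (K : R -> nat -> Prop) (z : R -> nat -> state).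
Hypothesis Hsol : is_solution P K z.
Variables (j : nat) (Lj : R).
Hypotheses (Hj : (j < nN P)%nat) (HLj : 0 <= Lj).
Hypothesis Hrate : forall t l, K t l -> Rabs (omega_rhs P (z t l) j / M P j) <= Lj.

Lemma flow_interval m a b : K a m -> K b m -> a <= b ->
  Rabs (omega (z b m) j - omega (z a m) j) <= Lj * (b - a) /\
  Defs.sigma (z b m) j = Defs.sigma (z a m) j.
Proof.
  intros Ha Hb Hab. destruct Hsol as [HK [_ [_ [Hflow _]]]].
  destruct (Req_dec a b) as [<-|Hne]; [rewrite !Rminus_diag, Rabs_R0, Rmult_0_r; split; [lra|auto]|].
  assert (Hin : forall s, a <= s <= b -> K s m) by (intros s Hs; exact (hdom_convex K HK a b s m Ha Hb Hs)).
  assert (Hint : forall t, a < t < b -> interior_pt (fun s => K s m) t).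
  { intros t Ht. exists (Rmin (t - a) (b - t)). split; [apply Rmin_glb_lt; lra|].
    intros s Hs. apply Hin. apply Rlt_le, Rabs_le_inv in Hs.
    pose proof (Rmin_l (t - a) (b - t)). pose proof (Rmin_r (t - a) (b - t)). lra. }
  destruct (Hflow m) as [Hac Hae].
  destruct Hae as [_ HN]; [exists ((a + b) / 2); apply Hint; lra|].
  set (N := fun t => _ /\ _) in HN.
  assert (Hder : forall t, a < t < b -> ~ N t -> forall c, relevant P c ->
             derivable_pt_lim (fun s => proj c (z s m)) t (fmap P (z t m) c)).
  { intros t Ht Hn. apply NNPP. intro Hc. apply Hn. split; auto. }
  split.
  - apply (abs_cont_lipschitz (fun s => proj (Comega j) (z s m)) a b Lj N); auto.
    intros t Ht Hn. exists (fmap P (z t m) (Comega j)).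
    split; [apply Hder; simpl; auto|apply Hrate, Hin; lra].
  - enough (Rabs (proj (Csig j) (z b m) - proj (Csig j) (z a m)) <= 0 * (b - a)) as Hconst.
    { simpl in Hconst. apply Rminus_diag_uniq, NNPP. intro Hdiff. apply Rabs_pos_lt in Hdiff. lra. }
    apply (abs_cont_lipschitz (fun s => proj (Csig j) (z s m)) a b 0 N); auto; [lra|].
    intros t Ht Hn. exists (fmap P (z t m) (Csig j)).
    split; [apply Hder; simpl; auto|simpl; rewrite Rabs_R0; lra].
Qed.

(* Jumps that leave [sigma_j] unchanged do not move [omega_j] either, so the flow
   estimate chains across them. *)
Lemma drift_until_switch n0 s m : K s n0 -> (n0 <= m)%nat ->
  (forall i q, (n0 <= i < m)%nat -> K q i -> K q (S i) ->
     Defs.sigma (z q (S i)) j = Defs.sigma (z q i) j) ->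
  forall r, K r m -> s <= r ->
    Defs.sigma (z r m) j = Defs.sigma (z s n0) j /\
    Rabs (omega (z r m) j - omega (z s n0) j) <= Lj * (r - s).
Proof.
  intros Hs Hle Hkeep. pose proof Hsol as [HK [_ [_ [_ Hjump]]]].
  induction m as [|m IH]; intros r Hr Hsr.
  - assert (n0 = O) as -> by lia. destruct (flow_interval O s r); auto.
  - destruct (Nat.eq_dec n0 (S m)) as [->|Hne].
    { destruct (flow_interval (S m) s r); auto. }
    destruct (hdom_jump_before K HK r (S m) m Hr ltac:(lia)) as [q [Hq1 Hq2]].
    assert (Hsq : s <= q).
    { destruct (Nat.eq_dec n0 m) as [->|Hnm];
        [apply (hdom_le_jump K HK s q m)|apply (hdom_le_of_lt K HK s q n0 m)]; auto; lia. }
    assert (Hqr : q <= r) by (apply (hdom_jump_le K HK q r m (S m)); auto).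
    destruct (IH ltac:(lia) ltac:(intros; apply Hkeep; auto; lia) q Hq1 Hsq) as [Is Iw].
    destruct (flow_interval (S m) q r Hq2 Hr Hqr) as [Fw Fs].
    assert (Hom : omega (z q (S m)) j = omega (z q m) j)
      by (destruct (Hjump q m Hq1 Hq2) as [_ ->]; reflexivity).
    rewrite Hom in Fw. split; [rewrite Fs, Hkeep; auto; lia|].
    pose proof (Rabs_triang (omega (z r (S m)) j - omega (z q m) j)
                            (omega (z q m) j - omega (z s n0) j)) as Htri.
    replace (omega (z r (S m)) j - omega (z q m) j + (omega (z q m) j - omega (z s n0) j))
      with (omega (z r (S m)) j - omega (z s n0) j) in Htri by ring.
    assert (Lj * (r - s) = Lj * (r - q) + Lj * (q - s)) by ring. lra.
Qed.

Lemma switch_dwell_time s s' :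
  sigma_change K z j s -> sigma_change K z j s' -> s < s' ->
  (w1 P j - w0 P j) <= Lj * (s' - s).
Proof.
  intros [l [Hs1 [Hs2 Hsw]]] [l' [Hs1' [Hs2' Hsw']]] Hss'.
  pose proof Hsol as [HK [_ [_ [_ Hjump]]]].
  assert (Hll : (l < l')%nat).
  { apply Nat.nle_gt. intro Hle.
    pose proof (hdom_jump_le K HK s' s l' (S l) Hs1' Hs2' Hs2 ltac:(lia)). lra. }
  set (switch_at m := (S l <= m)%nat /\ exists r, K r m /\ K r (S m) /\
                        Defs.sigma (z r (S m)) j <> Defs.sigma (z r m) j).
  destruct (nat_least_witness switch_at l') as [ms [[Hms [rs [Hr1 [Hr2 Hrsw]]]] Hleast]].
  { split; [lia|eauto]. }
  assert (Hmsl : (ms <= l')%nat).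
  { apply Nat.nlt_ge. intro Hlt. apply (Hleast l' Hlt). split; [lia|eauto]. }
  assert (Hsrs : s <= rs) by (apply (hdom_jump_le K HK s rs l ms); auto).
  assert (Hrss' : rs <= s') by (apply (hdom_jump_le K HK rs s' ms (S l')); auto; lia).
  destruct (drift_until_switch (S l) s ms Hs2 Hms) with (r := rs) as [Hsg Hw]; auto.
  { intros i q Hi Hq1 Hq2. apply NNPP. intro Hc. apply (Hleast i); [lia|]. split; [lia|eauto]. }
  destruct (Hjump s l Hs1 Hs2) as [_ Hgs]. destruct (Hjump rs ms Hr1 Hr2) as [_ Hgr].
  rewrite Hgs in Hsw, Hsg, Hw. rewrite Hgr in Hrsw. simpl in *.
  pose proof (hysteresis_gap P (z s l) (z rs ms) j Hj Hsw Hrsw Hsg).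
  pose proof (Rmult_le_compat_l Lj (rs - s) (s' - s) HLj ltac:(lra)). lra.
Qed.

End Flow.

Theorem proposition1 (P : params) (HP : standing P)
  (K : R -> nat -> Prop) (z : R -> nat -> state)
  (Hsol : is_solution P K z) (Hcomp : complete K) (Hbd : bounded_sol P K z) :
  exists tau, 0 < tau /\
    forall j, (j < nN P)%nat ->
      forall s0 s s', sigma_change K z j s0 -> sigma_change K z j s ->
        sigma_change K z j s' -> s0 < s -> s < s' -> tau <= s' - s.
Proof.
  destruct (fin_pos_lower_bound (fun j tau => forall s s', sigma_change K z j s ->
              sigma_change K z j s' -> s < s' -> tau <= s' - s) (nN P)) as [tau [Htau Hdwell]].
  - intros j c c' Hc Hc' s s' Hs Hs' Hss'. specialize (Hc s s' Hs Hs' Hss'). lra.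
  - intros j Hj.
    destruct (omega_rate_bounded P HP K z Hbd j Hj) as [Lj [HLj Hrate]].
    assert (Hw : 0 < w0 P j < w1 P j) by (apply HP; auto).
    exists ((w1 P j - w0 P j) / (Lj + 1)). split; [apply Rdiv_lt_0_compat; lra|].
    intros s s' Hs Hs' Hss'.
    pose proof (switch_dwell_time P K z Hsol j Lj Hj HLj Hrate s s' Hs Hs' Hss').
    apply Rmult_le_reg_r with (Lj + 1); [lra|].
    unfold Rdiv. rewrite Rmult_assoc, Rinv_l; nra.
  - exists tau. split; [auto|]. intros j Hj s0 s s' _ Hs Hs' _ Hss'. exact (Hdwell j Hj s s' Hs Hs' Hss').
Qed.
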